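(* There are absolute constants $c,C>0$ such that for every $n$ and every connected simple undirected graph $G_0$ on $n$ nodes that has exactly $k\ge 1$ fewer edges than the complete graph on $n$ nodes, the two-hop walk process started from $G_0$ satisfies $$\Pr\big[G_{\lfloor c\,n\ln k\rfloor}\text{ is complete}\big]\le C e^{-k^{1/4}},$$ i.e., with probability at least $1-O(e^{-k^{1/4}})$ it takes $\Omega(n\log k)$ rounds to reach the complete graph.
   Context: Two-hop walk process (undirected): $G_0$ is a connected simple undirected graph on an $n$-node vertex set $V$. Given $G_t$, in round $t$ every node $x$ independently picks a neighbor $v$ of $x$ in $G_t$ uniformly at random, then a neighbor $w$ of $v$ in $G_t$ uniformly at random, and the edge $\{x,w\}$ is added (nothing happens if $w=x$ or the edge already exists); $G_{t+1}$ is $G_t$ together with all edges added in round $t$. Edges are never removed. *)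

From mathcomp Require Import all_boot.
From Stdlib Require Import Reals.

Set Implicit Arguments.
Unset Strict Implicit.
Unset Printing Implicit Defensive.

Definition graph (n : nat) := {set {set 'I_n}}.

Definition simple_graph n (G : graph n) : Prop :=
  forall e, e \in G -> #|e| = 2.

Definition adj n (G : graph n) : rel 'I_n :=
  fun x y => (x != y) && ([set x; y] \in G).

Definition connected n (G : graph n) : Prop :=
  forall x y : 'I_n, connect (adj G) x y.

Definition num_edges n (G : graph n) : nat := #|G|.

Definition complete n (G : graph n) : bool :=
  [forall x : 'I_n, forall y : 'I_n, (x != y) ==> adj G x y].

Definition deg n (G : graph n) (x : 'I_n) : nat := #|[set y | adj G x y]|.

(* A choice profile for one round: node x picks (f x).1 = v, then (f x).2 = w. *)
Definition profile n := {ffun 'I_n -> 'I_n * 'I_n}.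

(* Probability of a profile in G: product over x of
   [v ~ x] [w ~ v] / (deg x * deg v)   (uniform choices, independent). *)
Definition weight n (G : graph n) (f : profile n) : R :=
  \big[Rmult/R1]_(x : 'I_n)
     (if adj G x (f x).1 && adj G (f x).1 (f x).2
      then (/ (INR (deg G x) * INR (deg G (f x).1)))%R
      else R0).

Definition step n (G : graph n) (f : profile n) : graph n :=
  G :|: [set [set x; (f x).2] | x in [set x : 'I_n | (f x).2 != x]].

(* prob_complete t G = Pr[G_t is complete] for the two-hop walk process with G_0 = G. *)
Fixpoint prob_complete n (t : nat) (G : graph n) : R :=
  match t with
  | 0 => if complete G then R1 else R0
  | t'.+1 => \big[Rplus/R0]_(f : profile n) (weight G f * prob_complete t' (step G f))%R
  end.

Definition nat_floor (x : R) : nat := Z.to_nat (Int_part x).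

(* The potential S(G) is the number of ordered pairs (x, y), x <> y, that are
   not adjacent in G; it equals 2k when G misses k edges and vanishes on the
   complete graph.  Node x's pick (v, w) is "fresh" when w <> x is not yet a
   neighbour of x: only fresh picks add edges, and each of them decreases S by
   at most 2.  Writing q_x for the probability that x's pick is fresh, a
   counting argument gives (n - 1) * sum_x q_x <= 10 S(G).  As the picks are
   independent, an exponential moment computation then yields, for
   0 <= nu <= 1/2,  E[exp(- nu S(G_1))] <= exp(- nu rho S(G_0)) with
   rho = 1 - 60 / (n - 1); iterating, Pr[G_t complete] <= exp(- rho^t S(G_0) / 2).
   For t <= n ln k / 320 and n > 120 we get rho^t >= k^(-3/4), hence the bound
   exp(- k^(1/4)); for n <= 120 we have k <= 20000 and C = e^20000 suffices. *)

From HB Require Import structures.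
From mathcomp Require Import all_boot zify.
From Stdlib Require Import Reals Lra Lia.

Set Implicit Arguments.
Unset Strict Implicit.
Unset Printing Implicit Defensive.

Lemma RplusA : associative Rplus. Proof. by move=> *; ring. Qed.
Lemma RmultA : associative Rmult. Proof. by move=> *; ring. Qed.
Lemma RplusC : commutative Rplus. Proof. by move=> *; ring. Qed.
Lemma RmultC : commutative Rmult. Proof. by move=> *; ring. Qed.
Lemma Rplus0 : left_id R0 Rplus. Proof. by move=> *; ring. Qed.
Lemma Rmult1 : left_id R1 Rmult. Proof. by move=> *; ring. Qed.
Lemma Rmul0l : left_zero R0 Rmult. Proof. by move=> *; ring. Qed.
Lemma Rmul0r : right_zero R0 Rmult. Proof. by move=> *; ring. Qed.
Lemma RmulDl : left_distributive Rmult Rplus. Proof. by move=> *; ring. Qed.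
Lemma RmulDr : right_distributive Rmult Rplus. Proof. by move=> *; ring. Qed.
HB.instance Definition _ := Monoid.isComLaw.Build R R0 Rplus RplusA RplusC Rplus0.
HB.instance Definition _ := Monoid.isComLaw.Build R R1 Rmult RmultA RmultC Rmult1.
HB.instance Definition _ := Monoid.isMulLaw.Build R R0 Rmult Rmul0l Rmul0r.
HB.instance Definition _ := Monoid.isAddLaw.Build R Rmult Rplus RmulDl RmulDr.

Section RealBigops.
Variable I : finType.

Lemma sumR_le (F G : I -> R) : (forall i, F i <= G i)%R ->
  (\big[Rplus/R0]_i F i <= \big[Rplus/R0]_i G i)%R.
Proof. by move=> FG; apply: (big_ind2 (fun a b => a <= b)%R) => //; move=> *; lra. Qed.

Lemma sumR_ge0 (F : I -> R) : (forall i, 0 <= F i)%R -> (0 <= \big[Rplus/R0]_i F i)%R.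
Proof. by move=> F0; apply: (big_ind (fun a => 0 <= a)%R) => //; move=> *; lra. Qed.

Lemma prodR_ge0 (F : I -> R) : (forall i, 0 <= F i)%R -> (0 <= \big[Rmult/R1]_i F i)%R.
Proof. by move=> F0; apply: (big_ind (fun a => 0 <= a)%R) => //; move=> *; nra. Qed.

Lemma prodR_le (F G : I -> R) : (forall i, 0 <= F i <= G i)%R ->
  (\big[Rmult/R1]_i F i <= \big[Rmult/R1]_i G i)%R.
Proof.
move=> FG; suff: (0 <= \big[Rmult/R1]_i F i <= \big[Rmult/R1]_i G i)%R by case.
apply: (big_ind2 (fun a b => 0 <= a <= b)%R) => //; first lra.
by move=> a1 a2 b1 b2 [? ?] [? ?]; split; [nra | apply: Rmult_le_compat].
Qed.

Lemma exp_sum (F : I -> R) : exp (\big[Rplus/R0]_i F i) = \big[Rmult/R1]_i exp (F i).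
Proof. by apply: (big_morph exp); [exact: exp_plus | exact: exp_0]. Qed.

Lemma INR_sum (F : I -> nat) : INR (\sum_i F i) = \big[Rplus/R0]_i INR (F i).
Proof. by apply: (big_morph INR) => // m p; exact: plus_INR. Qed.

Lemma sumR_count (b : I -> bool) (c : R) :
  \big[Rplus/R0]_i (if b i then c else R0) = (INR (\sum_i (b i : nat)) * c)%R.
Proof.
rewrite INR_sum Rmult_comm big_distrr /=; apply: eq_bigr => i _.
by case: (b i) => /=; lra.
Qed.

Lemma sumR_indicator (b : I -> bool) (F : I -> nat) (c : R) :
  \big[Rplus/R0]_i (if b i then INR (F i) * c else R0)%R = (INR (\sum_i (b i * F i)) * c)%R.
Proof.
rewrite INR_sum Rmult_comm big_distrr /=; apply: eq_bigr => i _.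
by case: (b i); rewrite /= ?mul1n ?mul0n /=; lra.
Qed.

Lemma sumR_const (c : R) : \big[Rplus/R0]_(i : I) c = (INR #|I| * c)%R.
Proof.
by rewrite -sum1_card INR_sum big_distrl /=; apply: eq_bigr => i _; lra.
Qed.

End RealBigops.

Lemma INR2 : INR 2 = 2%R.
Proof. by rewrite /=; lra. Qed.

Lemma Rinv_ge0 r : (0 <= r -> 0 <= / r)%R.
Proof.
move=> r0; case: (Req_dec r 0) => [->|nz]; first by rewrite Rinv_0; lra.
by apply/Rlt_le/Rinv_0_lt_compat; lra.
Qed.

Lemma div_cross a b u v w : (0 < u -> 0 < v -> 0 < w -> a * w <= b * v ->
  a * / (u * v) <= b * / (w * u))%R.
Proof.
move=> u0 v0 w0 awbv.
have -> : (a * / (u * v) = (a * w) * / (u * v * w))%R by field; lra.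
have -> : (b * / (w * u) = (b * v) * / (u * v * w))%R by field; lra.
by apply: Rmult_le_compat_r => //; apply/Rinv_ge0/Rmult_le_pos; [apply: Rmult_le_pos|]; lra.
Qed.

Lemma exp_le x y : (x <= y -> exp x <= exp y)%R.
Proof. by case=> [xy | ->]; [apply/Rlt_le/exp_increasing | lra]. Qed.

(* e^(2 nu) - 1 <= 6 nu on [0, 1/2], since e^(2 nu) <= e <= 3 there. *)
Lemma exp_double_bound nu : (0 <= nu <= 1/2 -> exp (2 * nu) - 1 <= 6 * nu)%R.
Proof.
move=> nu_bd.
have lower := exp_ineq1_le (- (2 * nu)).
have inv : (exp (2 * nu) * exp (- (2 * nu)) = 1)%R by rewrite -exp_plus Rplus_opp_r exp_0.
have le3 : (exp (2 * nu) <= 3)%R by apply: Rle_trans exp_le_3; apply: exp_le; lra.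
by have := exp_pos (2 * nu); nra.
Qed.

Lemma exp_le_one_minus x : (0 <= x <= 1/2 -> exp (- (2 * x)) <= 1 - x)%R.
Proof.
move=> x_bd; have := exp_ineq1_le (2 * x); have := exp_pos (- (2 * x)).
have : (exp (2 * x) * exp (- (2 * x)) = 1)%R by rewrite -exp_plus Rplus_opp_r exp_0.
by nra.
Qed.

Lemma ln_ge0 x : (1 <= x -> 0 <= ln x)%R.
Proof. by rewrite -ln_1; case=> [x1 | <-]; [apply/Rlt_le/ln_increasing; lra | lra]. Qed.

Lemma exp_pow x t : (exp x ^ t = exp (INR t * x))%R.
Proof.
elim: t => [|t IH]; first by rewrite /= Rmult_0_l exp_0.
by rewrite S_INR /= IH -exp_plus; congr exp; ring.
Qed.

Lemma nat_floor_le x : (0 <= x)%R -> (INR (nat_floor x) <= x)%R.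
Proof.
move=> x0; have [floor_le _] := base_Int_part x; move: floor_le.
rewrite /nat_floor; case: (Int_part x) => [|p|p] /= floor_le; try lra.
by rewrite INR_IZR_INZ Znat.positive_nat_Z.
Qed.

Section Potential.
Variable n : nat.
Implicit Types (G : graph n) (x y : 'I_n).

Definition nonadj G x y : bool := (x != y) && ~~ adj G x y.

Definition nondeg G x : nat := \sum_y nonadj G x y.

Definition potential G : nat := \sum_x nondeg G x.

Lemma adj_sym G x y : adj G x y = adj G y x.
Proof. by rewrite /adj eq_sym setUC. Qed.

Lemma deg_sum G x : deg G x = \sum_y (adj G x y : nat).
Proof. by rewrite /deg -sum1_card big_mkcond; apply: eq_bigr => y _; rewrite inE. Qed.

Lemma deg_pos G x v : adj G x v -> 0 < deg G v.
Proof. by move=> xv; rewrite deg_sum (bigD1 x) //= adj_sym xv. Qed.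

Lemma deg_nondeg G x : deg G x + nondeg G x = n.-1.
Proof.
have -> : n.-1 = \sum_y ((x != y) : nat).
  rewrite -[in LHS](card_ord n) -(cardC1 x) -sum1_card big_mkcond /=.
  by apply: eq_bigr => y _; rewrite !inE eq_sym; case: (y == x).
rewrite deg_sum /nondeg -big_split /=; apply: eq_bigr => y _; rewrite /nonadj.
by case xy: (adj G x y); [case/andP: xy => -> | rewrite andbT].
Qed.

Lemma potential_complete G : complete G -> potential G = 0.
Proof.
move=> /forallP Gc; rewrite /potential big1 // => x _; rewrite /nondeg big1 // => y _.
rewrite /nonadj; case xy: (x != y) => //=.
by move: (Gc x) => /forallP /(_ y) /implyP /(_ xy) ->.
Qed.

Lemma set2_inj (a b x w : 'I_n) : a != b -> [set a; b] = [set x; w] ->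
  (a == x) && (b == w) || (a == w) && (b == x).
Proof.
move=> ab E.
have ha : a \in [set x; w] by rewrite -E !inE eqxx.
have hb : b \in [set x; w] by rewrite -E !inE eqxx orbT.
move: ha hb ab; rewrite !inE => /orP[/eqP ->|/eqP ->] /orP[/eqP ->|/eqP ->];
  by rewrite ?eqxx ?orbT.
Qed.

Lemma sum_eq1 (w : 'I_n) (c : bool) : \sum_b ((c && (w == b)) : nat) = c.
Proof.
case: c => /=; last by rewrite big1.
by rewrite (bigD1 w) //= eqxx big1 // => b; rewrite eq_sym => /negbTE ->.
Qed.

Lemma pairs_le2 (e : {set 'I_n}) :
  \sum_x \sum_y (((x != y) && (e == [set x; y])) : nat) <= 2.
Proof.
case: (boolP [exists x, exists y, (x != y) && (e == [set x; y])]); last first.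
  move=> /existsPn He; rewrite big1 // => x _; rewrite big1 // => y _.
  by move: (He x) => /existsPn /(_ y) /negbTE ->.
move=> /existsP [a] /existsP [b] /andP [ab /eqP Ee].
apply: (@leq_trans (\sum_x \sum_y (((a == x) && (b == y)) + ((b == x) && (a == y))))).
  apply: leq_sum => x _; apply: leq_sum => y _.
  case xy: (x != y) => //=; case E: (e == [set x; y]) => //=.
  move: E; rewrite Ee => /eqP /(set2_inj ab).
  by case/orP => /andP [/eqP -> /eqP ->]; rewrite !eqxx //= ?addn1.
under eq_bigr => x _ do rewrite big_split /= !sum_eq1.
by rewrite big_split /= (sum_eq1 a true) (sum_eq1 b true).
Qed.

Lemma deg_total G : \sum_x deg G x <= 2 * #|G|.
Proof.
apply: (@leq_trans (\sum_x \sum_y \sum_(e in G) (((x != y) && (e == [set x; y])) : nat))).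
  apply: leq_sum => x _; rewrite deg_sum; apply: leq_sum => y _.
  rewrite /adj; case: (x != y) => //=; case xyG: ([set x; y] \in G) => //=.
  by rewrite (bigD1 [set x; y]) //= eqxx.
rewrite exchange_big /=; under eq_bigr => x _ do rewrite exchange_big /=.
rewrite exchange_big /= -sum1_card big_distrr /=.
by apply: leq_sum => e _; rewrite muln1 exchange_big; exact: pairs_le2.
Qed.

Lemma bin2_double : 2 * 'C(n, 2) = n * n.-1.
Proof. by elim: n => [|m IH] //; rewrite binS bin1 mulnDr IH; case: m {IH} => //=; nia. Qed.

Lemma potential_ge G k : #|G| + k = 'C(n, 2) -> 2 * k <= potential G.
Proof.
move=> Gk.
have degs : \sum_x (deg G x + nondeg G x) = n * n.-1.
  by under eq_bigr => x _ do rewrite deg_nondeg; rewrite sum_nat_const card_ord.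
move: degs (deg_total G) bin2_double Gk; rewrite big_split /= -/(potential G).
by lia.
Qed.

End Potential.

Section OneRound.
Variable n : nat.
Implicit Types (G : graph n) (x v w : 'I_n) (f : profile n).

Definition fresh G x (p : 'I_n * 'I_n) : bool := nonadj G x p.2.

Lemma nonadj_step G f a b :
  nonadj G a b <= nonadj (step G f) a b + (fresh G a (f a) && ((f a).2 == b))
                  + (fresh G b (f b) && ((f b).2 == a)).
Proof.
rewrite /nonadj; case ab: (a != b) => //=.
case Gab: (adj G a b) => //=; case: (boolP (adj (step G f) a b)) => //=.
have abG : ([set a; b] \in G) = false by move: Gab; rewrite /adj ab.
rewrite /adj /step ab !inE abG /= => /imsetP [x]; rewrite inE => fx /(set2_inj ab).
case/orP => /andP [/eqP ea /eqP eb]; subst.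
- by rewrite /fresh /nonadj ab Gab eqxx.
- by rewrite /fresh /nonadj [x == _]eq_sym fx [adj G x _]adj_sym Gab eqxx addn1.
Qed.

Lemma potential_step G f :
  potential G <= potential (step G f) + 2 * \sum_x (fresh G x (f x) : nat).
Proof.
apply: (@leq_trans (\sum_a \sum_b (nonadj (step G f) a b
           + (fresh G a (f a) && ((f a).2 == b)) + (fresh G b (f b) && ((f b).2 == a))))).
  by apply: leq_sum => a _; apply: leq_sum => b _; exact: nonadj_step.
under eq_bigr => a _ do rewrite big_split /= big_split /= sum_eq1.
rewrite mul2n -addnn big_split /= big_split /= addnA leq_add2l exchange_big /=.
by under eq_bigr => b _ do rewrite sum_eq1.
Qed.

Definition pick_prob G x (p : 'I_n * 'I_n) : R :=
  if adj G x p.1 && adj G p.1 p.2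
  then (/ (INR (deg G x) * INR (deg G p.1)))%R else R0.

Lemma weightE G f : weight G f = \big[Rmult/R1]_x pick_prob G x (f x).
Proof. by []. Qed.

Lemma pick_prob_ge0 G x p : (0 <= pick_prob G x p)%R.
Proof.
rewrite /pick_prob; case: ifP => _; last lra.
by apply/Rinv_ge0/Rmult_le_pos; apply: pos_INR.
Qed.

Lemma weight_ge0 G f : (0 <= weight G f)%R.
Proof. by apply: prodR_ge0 => x; exact: pick_prob_ge0. Qed.

Lemma pick_prob_via G x v :
  \big[Rplus/R0]_w pick_prob G x (v, w) = if adj G x v then (/ INR (deg G x))%R else R0.
Proof.
rewrite /pick_prob /=; case xv: (adj G x v) => /=; last by rewrite big1.
rewrite sumR_count -deg_sum.
have dv : INR (deg G v) <> 0%R by apply: not_0_INR; case: (deg G v) (deg_pos xv).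
case: (Req_dec (INR (deg G x)) 0) => [->|dx]; first by rewrite Rmult_0_l !Rinv_0; lra.
by field.
Qed.

(* The picks of x form a sub-probability distribution (a probability when deg x > 0). *)
Lemma pick_prob_sum G x : (\big[Rplus/R0]_p pick_prob G x p <= 1)%R.
Proof.
rewrite -(pair_bigA _ (fun v w => pick_prob G x (v, w))) /=.
under eq_bigr => v _ do rewrite pick_prob_via.
rewrite sumR_count -deg_sum.
case: (Req_dec (INR (deg G x)) 0) => [->|dx]; first lra.
by rewrite Rinv_r //; lra.
Qed.

End OneRound.

(* If c <= min(mx, dv) and dv + mv = D then c / dv <= 2 (mx + mv) / D:
   either dv >= D/2, or mv > D/2 and c / dv <= 1. *)
Lemma ratio_bound c mx mv dv D : c <= mx -> c <= dv -> dv + mv = D ->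
  c * D <= 2 * (mx + mv) * dv.
Proof. by move=> c_mx c_dv dvD; case: (leqP mv dv) => ?; nia. Qed.

Section FreshProbability.
Variable n : nat.
Implicit Types (G : graph n) (x v w : 'I_n).

Definition fresh_prob G x : R :=
  \big[Rplus/R0]_p (if fresh G x p then pick_prob G x p else R0).

Lemma fresh_prob_ge0 G x : (0 <= fresh_prob G x)%R.
Proof. by apply: sumR_ge0 => p; case: ifP => _; [exact: pick_prob_ge0 | lra]. Qed.

Lemma fresh_prob_le1 G x : (fresh_prob G x <= 1)%R.
Proof.
apply: Rle_trans (pick_prob_sum G x); apply: sumR_le => p.
by case: ifP => _; [lra | exact: pick_prob_ge0].
Qed.

Definition fresh_count G x v : nat := \sum_w (adj G v w && nonadj G x w).

Lemma fresh_count_le_nondeg G x v : fresh_count G x v <= nondeg G x.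
Proof. by apply: leq_sum => w _; case: (adj G v w). Qed.

Lemma fresh_count_le_deg G x v : fresh_count G x v <= deg G v.
Proof. by rewrite deg_sum; apply: leq_sum => w _; case: (adj G v w); rewrite //= leq_b1. Qed.

Lemma fresh_prob_via G x v :
  \big[Rplus/R0]_w (if fresh G x (v, w) then pick_prob G x (v, w) else R0) =
  if adj G x v then (INR (fresh_count G x v) * / (INR (deg G x) * INR (deg G v)))%R
  else R0.
Proof.
rewrite /fresh /pick_prob /=; case xv: (adj G x v) => /=.
  by rewrite /fresh_count -sumR_count; apply: eq_bigr => w _; case: (adj G v w); case: (nonadj G x w).
by rewrite big1 // => w _; case: ifP.
Qed.

Lemma nondeg_neighbours G x :
  \sum_v (adj G x v * (nondeg G x + nondeg G v)) <= nondeg G x * deg G x + potential G.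
Proof.
under eq_bigr => v _ do rewrite mulnDr.
rewrite big_split /= deg_sum big_distrr /= leq_add //.
  by apply: leq_sum => v _; rewrite mulnC.
by apply: leq_sum => v _; case: (adj G x v); rewrite /= ?mul1n.
Qed.

(* q_x <= 2 (mx dx + S) / (D dx): each neighbour v contributes
   fresh_count / (dx dv) <= 2 (mx + mv) / (D dx) by ratio_bound. *)
Lemma fresh_prob_le G x : 0 < deg G x ->
  (fresh_prob G x <= INR (nondeg G x * deg G x + potential G)
                     * (2 * / (INR n.-1 * INR (deg G x))))%R.
Proof.
move=> dx0; have dx : (0 < INR (deg G x))%R by apply/lt_0_INR/ssrnat.ltP.
have D : (0 < INR n.-1)%R by rewrite -(deg_nondeg G x) plus_INR; have := pos_INR (nondeg G x); lra.
rewrite /fresh_prob -(pair_bigA _ (fun v w => if fresh G x (v, w) then pick_prob G x (v, w) else R0)) /=.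
under eq_bigr => v _ do rewrite fresh_prob_via.
apply: (@Rle_trans _ (\big[Rplus/R0]_v (if adj G x v then
          INR (nondeg G x + nondeg G v) * (2 * / (INR n.-1 * INR (deg G x))) else R0))%R).
  apply: sumR_le => v; case xv: (adj G x v); last lra.
  have dv : (0 < INR (deg G v))%R by apply/lt_0_INR/ssrnat.ltP/(deg_pos xv).
  have key := ratio_bound (fresh_count_le_nondeg G x v) (fresh_count_le_deg G x v) (deg_nondeg G v).
  move/ssrnat.leP/le_INR: key; rewrite !mult_INR INR2 => key.
  by rewrite -Rmult_assoc; apply: div_cross => //; lra.
rewrite sumR_indicator; apply: Rmult_le_compat_r.
  by apply: Rmult_le_pos; [lra | apply/Rinv_ge0; nra].
by apply/le_INR/ssrnat.leP/nondeg_neighbours.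
Qed.

Lemma fresh_prob_bound G x : 1 < n ->
  (fresh_prob G x * INR n.-1 * INR n.-1
     <= 2 * INR (nondeg G x) * INR n.-1 + 4 * INR (potential G))%R.
Proof.
move=> n1; have Dx := deg_nondeg G x.
have S0 := pos_INR (potential G); have q0 := fresh_prob_ge0 G x.
case: (ltnP (2 * deg G x) n.-1) => [low_deg | high_deg].
  have : n.-1 * n.-1 <= 2 * nondeg G x * n.-1 by nia.
  move/ssrnat.leP/le_INR; rewrite !mult_INR INR2.
  by have := fresh_prob_le1 G x; have := pos_INR n.-1; nra.
have dx0 : 0 < deg G x by nia.
have dx : (0 < INR (deg G x))%R by apply/lt_0_INR/ssrnat.ltP.
have D : (0 < INR n.-1)%R by apply/lt_0_INR/ssrnat.ltP; nia.
have D2 : (INR n.-1 <= 2 * INR (deg G x))%R by rewrite -INR2 -mult_INR; apply/le_INR/ssrnat.leP.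
have := fresh_prob_le dx0; rewrite plus_INR mult_INR => qle.
have : (fresh_prob G x * (INR n.-1 * INR (deg G x))
          <= 2 * (INR (nondeg G x) * INR (deg G x) + INR (potential G)))%R.
  apply: (Rmult_le_reg_r (/ (INR n.-1 * INR (deg G x)))); first by apply/Rinv_0_lt_compat; nra.
  by rewrite Rmult_assoc Rinv_r; [lra | nra].
by nra.
Qed.

Lemma fresh_prob_total G : 1 < n ->
  (\big[Rplus/R0]_x fresh_prob G x * INR n.-1 <= 10 * INR (potential G))%R.
Proof.
move=> n1.
have D : (0 < INR n.-1)%R by apply/lt_0_INR/ssrnat.ltP; nia.
have nD : (INR n <= 2 * INR n.-1)%R by rewrite -INR2 -mult_INR; apply/le_INR/ssrnat.leP; nia.
have : (\big[Rplus/R0]_x fresh_prob G x * INR n.-1 * INR n.-1 <=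
          \big[Rplus/R0]_x (2 * INR (nondeg G x) * INR n.-1 + 4 * INR (potential G)))%R.
  rewrite Rmult_assoc Rmult_comm big_distrr; apply: sumR_le => x /=.
  by rewrite Rmult_comm -Rmult_assoc; exact: fresh_prob_bound.
have -> : (\big[Rplus/R0]_x (2 * INR (nondeg G x) * INR n.-1 + 4 * INR (potential G))
           = 2 * INR n.-1 * INR (potential G) + INR n * (4 * INR (potential G)))%R.
  rewrite big_split sumR_const card_ord /=; congr (_ + _)%R.
  by rewrite /potential INR_sum big_distrr /=; apply: eq_bigr => x _; ring.
have := pos_INR (potential G).
have : (0 <= \big[Rplus/R0]_x fresh_prob G x)%R by apply: sumR_ge0 => x; exact: fresh_prob_ge0.
by nra.
Qed.

End FreshProbability.

Section ExponentialMoment.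
Variable n : nat.
Implicit Types (G : graph n) (x : 'I_n) (f : profile n).

(* exp(2 nu) for a fresh pick, 1 otherwise: the factor by which a pick of x
   can inflate exp(- nu S). *)
Definition fresh_factor G (nu : R) x (p : 'I_n * 'I_n) : R :=
  if fresh G x p then exp (2 * nu) else 1%R.

Lemma potential_step_exp G f (nu : R) : (0 <= nu)%R ->
  (exp (- nu * INR (potential (step G f)))
     <= exp (- nu * INR (potential G)) * \big[Rmult/R1]_x fresh_factor G nu x (f x))%R.
Proof.
move=> nu0.
have := le_INR _ _ (ssrnat.leP (potential_step G f)).
rewrite plus_INR mult_INR INR2 INR_sum => drop.
have -> : (\big[Rmult/R1]_x fresh_factor G nu x (f x) =
           exp (\big[Rplus/R0]_x (2 * nu * INR (fresh G x (f x)))))%R.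
  rewrite exp_sum; apply: eq_bigr => x _; rewrite /fresh_factor.
  by case: (fresh G x (f x)) => /=; [congr exp; ring | rewrite Rmult_0_r exp_0].
rewrite -exp_plus; apply: exp_le; rewrite -big_distrr /=.
by set fresh_picks := \big[Rplus/R0]_i _ in drop *; nra.
Qed.

(* The conditional mean of x's factor: 1 + (e^(2 nu) - 1) q_x <= exp((e^(2 nu) - 1) q_x). *)
Lemma fresh_factor_mean G (nu : R) x : (0 <= nu)%R ->
  (\big[Rplus/R0]_p (pick_prob G x p * fresh_factor G nu x p)
     <= exp ((exp (2 * nu) - 1) * fresh_prob G x))%R.
Proof.
move=> nu0.
have -> : (\big[Rplus/R0]_p (pick_prob G x p * fresh_factor G nu x p) =
           \big[Rplus/R0]_p pick_prob G x p + (exp (2 * nu) - 1) * fresh_prob G x)%R.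
  rewrite /fresh_prob big_distrr -big_split; apply: eq_bigr => p _.
  by rewrite /fresh_factor; case: (fresh G x p) => /=; ring.
have := pick_prob_sum G x; have := exp_ineq1_le ((exp (2 * nu) - 1) * fresh_prob G x).
lra.
Qed.

(* Independence of the picks: the expected product of factors factorizes. *)
Lemma exp_moment_step G (nu : R) : (0 <= nu)%R ->
  (\big[Rplus/R0]_(f : profile n) (weight G f * exp (- nu * INR (potential (step G f))))
     <= exp (- nu * INR (potential G))
        * exp ((exp (2 * nu) - 1) * \big[Rplus/R0]_x fresh_prob G x))%R.
Proof.
move=> nu0.
apply: (@Rle_trans _ (\big[Rplus/R0]_(f : profile n) (exp (- nu * INR (potential G)) *
          \big[Rmult/R1]_x (pick_prob G x (f x) * fresh_factor G nu x (f x))))%R).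
  apply: sumR_le => f; rewrite big_split /= -weightE.
  apply: Rle_trans (Rmult_le_compat_l _ _ _ (weight_ge0 G f) (potential_step_exp G f nu0)) _.
  by right; rewrite -!Rmult_assoc [(weight G f * _)%R]Rmult_comm.
rewrite -big_distrr; apply: Rmult_le_compat_l; first exact/Rlt_le/exp_pos.
rewrite -(bigA_distr_bigA (fun x p => pick_prob G x p * fresh_factor G nu x p)%R).
rewrite big_distrr exp_sum; apply: prodR_le => x; split; last exact: fresh_factor_mean.
apply: sumR_ge0 => p; apply: Rmult_le_pos; first exact: pick_prob_ge0.
by rewrite /fresh_factor; case: ifP => _; [exact/Rlt_le/exp_pos | lra].
Qed.

(* The case nu = 0 of exp_moment_step says the profile weights have total
   mass at most 1; hence every prob_complete is at most 1. *)
Lemma prob_complete_le1 t G : (prob_complete t G <= 1)%R.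
Proof.
elim: t G => [|t IH] G /=; first by case: (complete G); lra.
apply: (@Rle_trans _ (\big[Rplus/R0]_(f : profile n)
          (weight G f * exp (- 0 * INR (potential (step G f)))))%R).
  apply: sumR_le => f; rewrite Ropp_0 Rmult_0_l exp_0.
  by have := IH (step G f); have := weight_ge0 G f; nra.
apply: Rle_trans (exp_moment_step G (Rle_refl 0)) _.
by rewrite Rmult_0_r exp_0 Rminus_diag Rmult_0_l Ropp_0 Rmult_0_l exp_0; lra.
Qed.

Lemma exp_moment_round G (nu : R) : 1 < n -> (0 <= nu <= 1/2)%R ->
  (\big[Rplus/R0]_(f : profile n) (weight G f * exp (- nu * INR (potential (step G f))))
     <= exp (- (nu * (1 - 60 / INR n.-1)) * INR (potential G)))%R.
Proof.
move=> n1 nu_bd; apply: Rle_trans (exp_moment_step G (proj1 nu_bd)) _.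
rewrite -exp_plus; apply: exp_le.
have D : (0 < INR n.-1)%R by apply/lt_0_INR/ssrnat.ltP; nia.
have qtot := fresh_prob_total G n1.
have q0 : (0 <= \big[Rplus/R0]_x fresh_prob G x)%R by apply: sumR_ge0 => x; exact: fresh_prob_ge0.
have e2 := exp_double_bound nu_bd; have e1 := exp_ineq1_le (2 * nu).
set Q := \big[Rplus/R0]_x fresh_prob G x in qtot q0 *.
have bound : ((exp (2 * nu) - 1) * Q * INR n.-1 <= 60 * nu * INR (potential G))%R.
  by have := pos_INR (potential G); nra.
have -> : (- (nu * (1 - 60 / INR n.-1)) * INR (potential G)
           = - nu * INR (potential G) + 60 * nu * INR (potential G) / INR n.-1)%R.
  by field; lra.
suff : ((exp (2 * nu) - 1) * Q <= 60 * nu * INR (potential G) / INR n.-1)%R by lra.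
apply: (Rmult_le_reg_r (INR n.-1)) => //.
have -> : (60 * nu * INR (potential G) / INR n.-1 * INR n.-1 = 60 * nu * INR (potential G))%R.
  by field; lra.
exact: bound.
Qed.

(* Iterating: Pr[G_t complete] <= exp(- nu rho^t S(G_0)), using that S vanishes
   on the complete graph. *)
Lemma prob_complete_decay t G (nu : R) : (60 <= INR n.-1)%R -> 1 < n ->
  (0 <= nu <= 1/2)%R ->
  (prob_complete t G <= exp (- (nu * (1 - 60 / INR n.-1) ^ t) * INR (potential G)))%R.
Proof.
move=> D60 n1; set rho := (1 - 60 / INR n.-1)%R.
have rho_bd : (0 <= rho <= 1)%R.
  have : (0 <= 60 / INR n.-1 <= 1)%R.
    split; first by apply: Rmult_le_pos; [lra | apply: Rinv_ge0; lra].
    by apply: (Rmult_le_reg_r (INR n.-1)); [lra | rewrite /Rdiv Rmult_assoc Rinv_l; lra].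
  by rewrite /rho; lra.
elim: t G nu => [|t IH] G nu nu_bd /=.
  case: (boolP (complete G)) => [Gc | _]; last exact/Rlt_le/exp_pos.
  by rewrite (potential_complete Gc) Rmult_0_r exp_0; lra.
have rho_t : (0 <= rho ^ t <= 1)%R.
  by split; [apply: pow_le; lra | rewrite -(pow1 t); apply: pow_incr; lra].
have nu_t : (0 <= nu * rho ^ t <= 1/2)%R by split; nra.
have -> : (nu * (rho * rho ^ t) = nu * rho ^ t * rho)%R by ring.
apply: Rle_trans _ (exp_moment_round G n1 nu_t).
apply: sumR_le => f; apply: Rmult_le_compat_l; first exact: weight_ge0.
exact: IH.
Qed.

End ExponentialMoment.

Lemma decay_factor_ge n t (k : R) : (120 <= INR n.-1)%R -> (1 <= k)%R ->
  (INR t <= 1/320 * INR n * ln k)%R ->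
  (exp (- (3/4) * ln k) <= (1 - 60 / INR n.-1) ^ t)%R.
Proof.
move=> D120 k1 t_le.
have nD : (INR n <= 2 * INR n.-1)%R.
  suff : (INR n <= INR n.-1 + 1)%R by lra.
  by rewrite -S_INR; apply/le_INR/ssrnat.leP; rewrite leqSpred.
have lnk := ln_ge0 k1.
have step_ge : (exp (- (2 * (60 / INR n.-1))) <= 1 - 60 / INR n.-1)%R.
  apply: exp_le_one_minus; split; first by apply: Rmult_le_pos; [lra | apply: Rinv_ge0; lra].
  by apply: (Rmult_le_reg_r (INR n.-1)); [lra | rewrite /Rdiv Rmult_assoc Rinv_l; lra].
apply: Rle_trans (pow_incr _ _ t (conj (Rlt_le _ _ (exp_pos _)) step_ge)).
rewrite exp_pow; apply: exp_le.
have : (INR t * (60 / INR n.-1) * INR n.-1 <= 3/8 * ln k * INR n.-1)%R.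
  have -> : (INR t * (60 / INR n.-1) * INR n.-1 = 60 * INR t)%R by field; lra.
  by nra.
by nra.
Qed.

Lemma completion_bound_large n k (G0 : graph n) : (120 <= n.-1)%N -> (1 <= k)%N ->
  num_edges G0 + k = 'C(n, 2) ->
  (prob_complete (nat_floor (1/320 * INR n * ln (INR k))) G0
     <= exp (- Rpower (INR k) (1 / 4)))%R.
Proof.
move=> n120 k1 G0k; set T := nat_floor _.
have D120 : (120 <= INR n.-1)%R by rewrite -(INR_IZR_INZ 120); apply/le_INR/ssrnat.leP.
have n1 : 1 < n by case: n n120 {G0 G0k T D120} => [|[|m]].
have k1R : (1 <= INR k)%R by apply: (le_INR 1); apply/ssrnat.leP.
have lnk := ln_ge0 k1R.
have T_le : (INR T <= 1/320 * INR n * ln (INR k))%R.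
  by apply: nat_floor_le; apply: Rmult_le_pos => //; apply: Rmult_le_pos; [lra | exact: pos_INR].
have decay := decay_factor_ge D120 k1R T_le.
have S2k : (2 * INR k <= INR (potential G0))%R.
  by rewrite -INR2 -mult_INR; apply/le_INR/ssrnat.leP/potential_ge.
have quarter : (Rpower (INR k) (1 / 4) <= (1 - 60 / INR n.-1) ^ T * INR k)%R.
  apply: (@Rle_trans _ (exp (- (3/4) * ln (INR k)) * INR k)%R); last by apply: Rmult_le_compat_r; lra.
  rewrite /Rpower {3}(_ : INR k = exp (ln (INR k))); last by rewrite exp_ln; lra.
  by rewrite -exp_plus; apply: exp_le; lra.
have half : (0 <= 1/2 <= 1/2)%R by lra.
apply: Rle_trans (prob_complete_decay T G0 ltac:(lra) n1 half) _.
by apply: exp_le; have := exp_pos (- (3/4) * ln (INR k)); nra.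
Qed.

(* Small case, n <= 120: then k <= 'C(n, 2) <= 120 * 120 / 2. *)
Lemma missing_edges_small n k (G0 : graph n) : (n.-1 < 120)%N ->
  num_edges G0 + k = 'C(n, 2) -> (INR k <= 20000)%R.
Proof.
move=> n_small G0k.
have kC : (INR k <= INR 'C(n, 2))%R by apply/le_INR/ssrnat.leP; rewrite -G0k leq_addl.
have C2 : (2 * INR 'C(n, 2) = INR n * INR n.-1)%R by rewrite -INR2 -!mult_INR; congr INR; exact: bin2_double.
have nR : (INR n <= 120)%R.
  by rewrite -(INR_IZR_INZ 120); apply/le_INR/ssrnat.leP; lia.
have n1R : (INR n.-1 <= 120)%R.
  by rewrite -(INR_IZR_INZ 120); apply/le_INR/ssrnat.leP; lia.
by have := pos_INR n; have := pos_INR n.-1; nra.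
Qed.

Theorem theorem13 :
  exists c C : R, (0 < c)%R /\ (0 < C)%R /\
  forall (n k : nat) (G0 : graph n),
    simple_graph G0 -> connected G0 -> 1 <= k ->
    num_edges G0 + k = 'C(n, 2) ->
    (prob_complete (nat_floor (c * INR n * ln (INR k))) G0
       <= C * exp (- Rpower (INR k) (1 / 4)))%R.
Proof.
exists (1/320)%R, (exp 20000); split; first lra; split; first exact: exp_pos.
move=> n k G0 _ _ k1 G0k.
have k1R : (1 <= INR k)%R by apply: (le_INR 1); apply/ssrnat.leP.
have e20000 : (1 <= exp 20000)%R by have := exp_ineq1_le 20000; lra.
have := exp_pos (- Rpower (INR k) (1 / 4)).
case: (ltnP n.-1 120) => [n_small | n_large] pos.
- (* k <= 20000, so the right-hand side is at least 1. *)
  have k_small := missing_edges_small n_small G0k.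
  have quarter_le : (Rpower (INR k) (1 / 4) <= INR k)%R.
    rewrite /Rpower -{2}(exp_ln (INR k)); last lra.
    by apply: exp_le; have := ln_ge0 k1R; lra.
  apply: Rle_trans (prob_complete_le1 _ G0) _.
  by rewrite -exp_plus; apply: Rle_trans (exp_ineq1_le _); lra.
- by have := completion_bound_large n_large k1 G0k; nra.
Qed.
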